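(* Let $(\Omega,\mathcal F,\mathbb P)$, $\mathnormal K$, $(\Omega_I,\mathcal F_I,\mathbb P_I)$, $\hat\Omega_I$, $\hat{\mathbb P}_I$ be as in the context, let $\{R_I: I\in\mathnormal K\}$ be events $R_I\in\mathcal F_I$ with $\mathbb P_I(R_I)>0$ for all $I$, and let $W$ be a random element of $\mathnormal K$. For $A\in\mathcal F$ define $A(I):=A\cap[W=I]$, $$\Phi_I(A):=\{\omega_1\in\hat\Omega_I:\ \mathbb P_I(A_{I,\omega_1})>0\}\times R_I,\qquad \Phi(A):=\bigcup_{I\in\mathnormal K}\Phi_I(A(I)),$$ $$\tilde\Phi(A):=\bigcup_{I\in\mathnormal K}\big[\{\omega_1\in\hat\Omega_I:\ A(I)_{I,\omega_1}\ne\emptyset\}\times R_I\big].$$ Then for each $A\in\mathcal F$, $\Phi(A)\in\mathcal F$ and $\Phi(A)\subseteq\tilde\Phi(A)$. Furthermore, if $\mathbb P(A)>0$ then $\mathbb P(\Phi(A))>0$.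
   Context: Construction of the probability space: let $\mathbf u_1,\mathbf u_2,\dots$ be an enumeration of $\mathbb Z^2$ and $\mathbf B_k:=\mathbf u_k+[-1/2,1/2]^2$. Let $N_k$ ($k\ge1$) be i.i.d. Poisson random variables of mean $1$; $U_{k,l}$ ($l\ge1$) independent random points with $U_{k,l}$ uniform in $\mathbf B_k$; and $\tau^{m,n}_{k,l}$ (for $l\ge1$, $m\ge k$, $n\ge1$, with $n>l$ when $m=k$) i.i.d. nonnegative random variables with distribution $\mathbb F$; all these collections are independent. The Poisson process consists of the points $U_{k,1},\dots,U_{k,N_k}$, $k\ge1$, and the edge $(U_{k,l},U_{m,n})$ of the Delaunay triangulation (with $m>k$, or $m=k$ and $n>l$) receives passage time $\tau^{m,n}_{k,l}$. $(\Omega,\mathcal F,\mathbb P)$ is the product over $k$ of the probability spaces $(\Omega^k,\mathcal F^k,\mathbb P^k)$ induced by $N_k$, $(U_{k,l})_l$ and $(\tau^{m,n}_{k,l})$. $\mathnormal K$ is the collection of finite sequences $I=((k_j,l_j,m_j,n_j))_{j=1,\dots,q}\in(\mathbb N^4)^q$, $q\ge1$, with pairwise distinct entries, $k_1\le\dots\le k_q$, and for each $j$ either $k_j<m_j$ or $l_j<n_j$. For $I\in\mathnormal K$, $(\Omega_I,\mathcal F_I,\mathbb P_I)$ is the probability space induced by the random vector $(\tau^{m_j,n_j}_{k_j,l_j})_{j=1,\dots,q}$ (so $\Omega_I=\mathbb R^q$), and each $\omega\in\Omega$ is written $\omega=(\omega_1,\omega_2)$ with $\omega_2\in\Omega_I$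 its $I$-coordinates and $\omega_1$ the remaining coordinates; $\hat\Omega_I:=\{\omega_1:\ \exists\,\omega_2\in\Omega_I,\ (\omega_1,\omega_2)\in\Omega\}$ with $\hat{\mathbb P}_I$ the law of $\mathbb P$ restricted to these coordinates. For $A\subseteq\Omega$ and $\omega_1\in\hat\Omega_I$, $A_{I,\omega_1}:=\{\omega_2\in\Omega_I:\ (\omega_1,\omega_2)\in A\}$. *)

From HB Require Import structures.
From mathcomp Require Import all_boot all_order all_algebra all_classical all_reals all_analysis.



Unset Printing Implicit Defensive.
Import Order.TTheory GRing.Theory Num.Theory.
Local Open Scope classical_set_scope.
Local Open Scope ring_scope.

(* Indices of passage times: (k,l,m,n) stands for tau^{m,n}_{k,l}.
   All indices are 0-based (the paper's are 1-based). *)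
Definition quad := (nat * nat * nat * nat)%type.
Definition qk (e : quad) : nat := e.1.1.1.
Definition ql (e : quad) : nat := e.1.1.2.
Definition qm (e : quad) : nat := e.1.2.
Definition qn (e : quad) : nat := e.2.

Definition tvalid (e : quad) : bool :=
  (qk e < qm e)%N || ((qk e == qm e) && (ql e < qn e)%N).
Definition tidx := {e : quad | tvalid e}.
Definition t0 : tidx := exist _ (0, 0, 1, 0)%N erefl.

(* A sample point: the coordinates N_k, U_{k,l} (points of R^2) and the
   passage times tau^{m,n}_{k,l}. *)
Record omega (R : realType) := Omega {
  oN : nat -> nat;
  oU : nat -> nat -> (R * R)%type;
  oT : tidx -> R }.
Arguments Omega {R}.
Arguments oN {R}.
Arguments oU {R}.
Arguments oT {R}.

HB.instance Definition _ (R : realType) := gen_eqMixin (omega R).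
HB.instance Definition _ (R : realType) := gen_choiceMixin (omega R).
HB.instance Definition _ (R : realType) := isPointed.Build (omega R)
  (@Omega R (fun _ => 0%N) (fun _ _ => (0, 0)) (fun _ => 0)).

Definition gen_sets (R : realType) : set (set (omega R)) :=
  [set A | (exists k (B : set nat), measurable B /\ A = (fun w => oN w k) @^-1` B)
        \/ (exists k l (B : set (R * R)%type), measurable B /\
               A = (fun w => oU w k l) @^-1` B)
        \/ (exists t (B : set R), measurable B /\ A = (fun w => oT w t) @^-1` B)].

Definition Omg (R : realType) := g_sigma_algebraType (gen_sets R).

Definition box (R : realType) (u : nat -> (int * int)%type) (k : nat) : set (R * R)%type :=
  [set p | `|p.1 - (u k).1%:~R| <= 2^-1 /\ `|p.2 - (u k).2%:~R| <= 2^-1].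
Arguments box {R}.

(* uniform law on B_k (which has area 1) *)
Definition unif_box (R : realType) (u : nat -> (int * int)%type) (k : nat)
  (B : set (R * R)%type) : \bar R :=
  ((@lebesgue_measure R \x @lebesgue_measure R) (B `&` box u k))%E.
Arguments unif_box {R}.

(* P is the product probability of the laws: N_k ~ Poisson(1), U_{k,l} uniform
   in B_k, tau ~ F, all independent (characterized by its values on all
   finite-dimensional cylinder sets, which determine it uniquely). *)
Definition model_law (R : realType) (u : nat -> (int * int)%type)
  (F : probability R R) (P : probability (Omg R) R) : Prop :=
  forall (SN : seq nat) (SU : seq (nat * nat)%type) (ST : seq tidx)
         (BN : nat -> set nat) (BU : (nat * nat)%type -> set (R * R)%type)
         (BT : tidx -> set R),
    uniq SN -> uniq SU -> uniq ST ->
    (forall k, measurable (BN k)) -> (forall kl, measurable (BU kl)) ->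
    (forall t, measurable (BT t)) ->
    P [set w : Omg R | (forall k, k \in SN -> BN k (oN w k)) /\
                       (forall kl, kl \in SU -> BU kl (oU w kl.1 kl.2)) /\
                       (forall t, t \in ST -> BT t (oT w t))]
    = ((\prod_(k <- SN) poisson_prob (1 : R) 0 (BN k)) *
       (\prod_(kl <- SU) unif_box u kl.1 (BU kl)) *
       (\prod_(t <- ST) F (BT t)))%E.
Arguments model_law {R}.

Definition Kset : set (seq quad) :=
  [set I | (0 < size I)%N /\ uniq I /\ sorted leq [seq qk e | e <- I] /\
           all tvalid I].

Definition tau (R : realType) (w : omega R) (e : quad) : R := oT w (insubd t0 e).
Arguments tau {R}.

(* omega_2 : the I-coordinates of w, a point of Omega_I = R^q *)
Definition XI (R : realType) (I : seq quad) (w : omega R) : (size I).-tuple R :=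
  map_tuple (tau w) (in_tuple I).
Arguments XI {R}.

Definition PI (R : realType) (P : probability (Omg R) R) (I : seq quad)
  (B : set ((size I).-tuple R)) : \bar R :=
  P (XI I @^-1` B).
Arguments PI {R}.

(* (omega_1, x) : replace the I-coordinates of w by x *)
Definition set_tau (R : realType) (w : omega R) (I : seq quad) (x : seq R) : omega R :=
  @Omega R (oN w) (oU w)
    (fun t => if val t \in I then nth 0 x (index (val t) I) else oT w t).
Arguments set_tau {R}.

(* the section A_{I,omega_1} (depends only on the non-I coordinates of w) *)
Definition sec (R : realType) (A : set (omega R)) (I : seq quad) (w : omega R)
  : set ((size I).-tuple R) :=
  [set x | A (set_tau w I x)].
Arguments sec {R}.

Definition evW (R : realType) (W : Omg R -> seq quad) (I : seq quad) : set (Omg R) :=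
  [set w | W w = I].
Arguments evW {R}.

Definition PhiI (R : realType) (P : probability (Omg R) R)
  (RI : forall I : seq quad, set ((size I).-tuple R)) (I : seq quad)
  (B : set (Omg R)) : set (Omg R) :=
  [set w | (0 < PI P I (sec B I w))%E /\ RI I (XI I w)].
Arguments PhiI {R}.

Definition Phi (R : realType) (P : probability (Omg R) R)
  (RI : forall I : seq quad, set ((size I).-tuple R))
  (W : Omg R -> seq quad) (A : set (Omg R)) : set (Omg R) :=
  \bigcup_(I in Kset) PhiI P RI I (A `&` evW W I).
Arguments Phi {R}.

Definition PhiT (R : realType)
  (RI : forall I : seq quad, set ((size I).-tuple R))
  (W : Omg R -> seq quad) (A : set (Omg R)) : set (Omg R) :=
  \bigcup_(I in Kset) [set w | sec (A `&` evW W I) I w !=set0 /\ RI I (XI I w)].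
Arguments PhiT {R}.

From HB Require Import structures.
From mathcomp Require Import all_boot all_order all_algebra.
From mathcomp Require Import all_classical all_reals all_analysis measurable_realfun.
Import Order.TTheory GRing.Theory Num.Theory.
Local Open Scope classical_set_scope.
Local Open Scope ereal_scope.

(* Under P the coordinates of omega indexed by I are independent of the other
   ones and have law P_I (it suffices to check this on cylinder sets, which
   generate F and are closed under intersection).  Hence P is the image of
   P (x) P_I under the map (omega, x) |-> (omega_1, x) that overwrites the
   I-coordinates of omega by x, and by Fubini
   P(B) = int P_I(B_{I,omega_1}) dP(omega).  This integral is at most the
   probability of the set G of omega with P_I(B_{I,omega_1}) > 0, whereas
   P(Phi_I(B)) = P(G) P_I(R_I).  Since K is countable, P(A) > 0 forces
   P(A(I)) > 0 for some I, and then P(Phi(A)) >= P(Phi_I(A(I))) > 0. *)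

Lemma measurable_impl d (T : measurableType d) (b : bool) (A : set T) :
  measurable A -> measurable [set x | b -> A x].
Proof.
case: b => mA.
  rewrite (_ : [set x | true -> A x] = A) //.
  by apply/seteqP; split=> x /=; [apply|].
by rewrite (_ : [set x | false -> A x] = setT)//; apply/seteqP; split.
Qed.

Lemma bigcap_preimage_setI (X : eqType) (T Y : Type) (f : X -> T -> Y)
    (S1 S2 : seq X) (B1 B2 : X -> set Y) :
  \bigcap_(x in [set` S1]) (f x @^-1` B1 x) `&`
  \bigcap_(x in [set` S2]) (f x @^-1` B2 x) =
  \bigcap_(x in [set` undup (S1 ++ S2)])
    (f x @^-1` [set y | (x \in S1 -> B1 x y) /\ (x \in S2 -> B2 x y)]).
Proof.
apply/seteqP; split=> [w [h1 h2] x _|w h]; first by split=> [/h1|/h2]; apply.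
split=> x xS.
  by case: (h x) => [|+ _]; [rewrite /= mem_undup mem_cat xS|apply].
by case: (h x) => [|_ +]; [rewrite /= mem_undup mem_cat xS orbT|apply].
Qed.

Lemma measurable_fun_nth d (T : measurableType d) (x0 : T) n j :
  measurable_fun setT (fun x : n.-tuple T => nth x0 x j).
Proof.
have [jn|nj] := ltnP j n.
  rewrite (_ : (fun x => _) = fun x => tnth x (Ordinal jn)).
    exact: measurable_tnth.
  by apply/funext => x; rewrite (tnth_nth x0).
rewrite (_ : (fun x => _) = cst x0); first exact: measurable_cst.
by apply/funext => x; rewrite nth_default // size_tuple.
Qed.

Section cylinders.
Variable R : realType.

Lemma measurable_oN k : measurable_fun setT (fun w : Omg R => oN w k).
Proof. by move=> _ B mB; rewrite setTI; apply: sub_sigma_algebra; left; exists k, B. Qed.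

Lemma measurable_oU k l : measurable_fun setT (fun w : Omg R => oU w k l).
Proof.
by move=> _ B mB; rewrite setTI; apply: sub_sigma_algebra; right; left; exists k, l, B.
Qed.

Lemma measurable_oT t : measurable_fun setT (fun w : Omg R => oT w t).
Proof.
by move=> _ B mB; rewrite setTI; apply: sub_sigma_algebra; right; right; exists t, B.
Qed.

Lemma measurable_fun_Omg d (T : measurableType d) (f : T -> Omg R) :
  (forall k, measurable_fun setT (fun x => oN (f x) k)) ->
  (forall k l, measurable_fun setT (fun x => oU (f x) k l)) ->
  (forall t, measurable_fun setT (fun x => oT (f x) t)) ->
  measurable_fun setT f.
Proof.
move=> mN mU mT; apply: (@measurability _ _ _ _ _ f (gen_sets R)) => //.
by move=> _ [C [[k [B [mB ->]]]|[[k [l [B [mB ->]]]]|[t [B [mB ->]]]]] <-];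
  [exact: mN|exact: mU|exact: mT].
Qed.

Definition cyl (SN : seq nat) (SU : seq (nat * nat)) (ST : seq tidx)
    (BN : nat -> set nat) (BU : nat * nat -> set (R * R)) (BT : tidx -> set R)
  : set (Omg R) :=
  \bigcap_(k in [set` SN]) ((fun w => oN w k) @^-1` BN k) `&`
  (\bigcap_(kl in [set` SU]) ((fun w => oU w kl.1 kl.2) @^-1` BU kl) `&`
   \bigcap_(t in [set` ST]) ((fun w => oT w t) @^-1` BT t)).

Definition cylinders : set (set (Omg R)) :=
  [set C | exists SN SU ST BN BU BT,
    [/\ uniq SN, uniq SU, uniq ST,
        [/\ forall k, measurable (BN k), forall kl, measurable (BU kl)
          & forall t, measurable (BT t)]
      & C = cyl SN SU ST BN BU BT]].

Lemma measurable_cyl SN SU ST BN BU BT :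
  (forall k, measurable (BN k)) -> (forall kl, measurable (BU kl)) ->
  (forall t, measurable (BT t)) -> measurable (cyl SN SU ST BN BU BT).
Proof.
move=> mBN mBU mBT.
by apply: measurableI; [|apply: measurableI]; apply: fin_bigcap_measurable;
  rewrite ?finite_seq // => x _; rewrite -[X in measurable X]setTI;
  [exact: measurable_oN|exact: measurable_oU|exact: measurable_oT].
Qed.

Lemma cylinders_setI : setI_closed cylinders.
Proof.
move=> _ _ [SN1 [SU1 [ST1 [BN1 [BU1 [BT1 [uN1 uU1 uT1 [mN1 mU1 mT1] ->]]]]]]]
  [SN2 [SU2 [ST2 [BN2 [BU2 [BT2 [uN2 uU2 uT2 [mN2 mU2 mT2] ->]]]]]]].
pose merge (X : eqType) Y (S1 S2 : seq X) (B1 B2 : X -> set Y) x :=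
  [set y | (x \in S1 -> B1 x y) /\ (x \in S2 -> B2 x y)].
exists (undup (SN1 ++ SN2)), (undup (SU1 ++ SU2)), (undup (ST1 ++ ST2)),
  (merge _ _ SN1 SN2 BN1 BN2), (merge _ _ SU1 SU2 BU1 BU2),
  (merge _ _ ST1 ST2 BT1 BT2).
split; rewrite ?undup_uniq //.
  by split=> x; apply: measurableI; apply: measurable_impl.
rewrite /cyl setIACA bigcap_preimage_setI; congr (_ `&` _).
by rewrite setIACA !bigcap_preimage_setI.
Qed.

Lemma cylinders_setT : cylinders setT.
Proof.
exists [::], [::], [::], (fun=> setT), (fun=> setT), (fun=> setT); split => //.
by rewrite /cyl !set_nil !bigcap_set0 !setIT.
Qed.

Lemma measurable_Omg_cylinders : @measurable _ (Omg R) = <<s cylinders>>.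
Proof.
apply/seteqP; split.
  apply: sub_sigma_algebra2.
  move=> _ [[k [B [mB ->]]]|[[k [l [B [mB ->]]]]|[t [B [mB ->]]]]].
  - exists [:: k], [::], [::], (fun=> B), (fun=> setT), (fun=> setT).
    by split=> //; rewrite /cyl !set_nil set_cons1 !bigcap_set0 bigcap_set1 !setIT.
  - exists [::], [:: (k, l)], [::], (fun=> setT), (fun=> B), (fun=> setT).
    by split=> //; rewrite /cyl !set_nil set_cons1 !bigcap_set0 bigcap_set1 setIT setTI.
  - exists [::], [::], [:: t], (fun=> setT), (fun=> setT), (fun=> B).
    by split=> //; rewrite /cyl !set_nil set_cons1 !bigcap_set0 bigcap_set1 !setTI.
apply: smallest_sub; first exact: sigma_algebra_measurable.
by move=> _ [SN [SU [ST [BN [BU [BT [_ _ _ [mN mU mT] ->]]]]]]]; apply: measurable_cyl.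
Qed.

End cylinders.
Arguments cyl {R}.
Arguments cylinders {R}.
Arguments measurable_oN {R}.
Arguments measurable_oU {R}.
Arguments measurable_oT {R}.

Section resampling.
Variables (R : realType) (I : seq quad).

Definition resample (p : Omg R * (size I).-tuple R) : Omg R := set_tau p.1 I p.2.

Lemma measurable_XI : measurable_fun setT (XI I : Omg R -> _).
Proof.
apply/measurable_fun_tnthP => i; rewrite /comp.
under eq_fun do rewrite tnth_map.
exact: measurable_oT.
Qed.

Lemma measurable_resample : measurable_fun setT resample.
Proof.
apply: measurable_fun_Omg => [k|k l|t].
- exact: measurableT_comp (measurable_oN k) measurable_fst.
- exact: measurableT_comp (measurable_oU k l) measurable_fst.
- rewrite /resample /set_tau /=; case: (val t \in I).
    exact: measurableT_comp (@measurable_fun_nth _ R 0%R _ _) measurable_snd.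
  exact: measurableT_comp (measurable_oT t) measurable_fst.
Qed.

Lemma measurable_resample_preimage (B : set (Omg R)) : measurable B ->
  measurable (resample @^-1` B).
Proof.
by move=> mB; rewrite -[X in measurable X]setTI; exact: measurable_resample.
Qed.

HB.instance Definition _ :=
  isMeasurableFun.Build _ _ _ _ (XI I : Omg R -> _) measurable_XI.
HB.instance Definition _ :=
  isMeasurableFun.Build _ _ _ _ resample measurable_resample.

Lemma nth_XI (w : omega R) (t : tidx) : val t \in I ->
  nth 0%R (XI I w) (index (val t) I) = oT w t.
Proof.
move=> tI; rewrite (nth_map (val t)) ?index_mem // nth_index //.
by rewrite /tau valKd.
Qed.

Definition tuple_cyl (ST : seq tidx) (BT : tidx -> set R) : set ((size I).-tuple R) :=
  \bigcap_(t in [set` ST]) ((fun x => nth 0%R x (index (val t) I)) @^-1` BT t).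

Lemma resample_preimage_cyl SN SU ST BN BU BT :
  resample @^-1` cyl SN SU ST BN BU BT =
  cyl SN SU [seq t <- ST | val t \notin I] BN BU BT `*`
  tuple_cyl [seq t <- ST | val t \in I] BT.
Proof.
apply/seteqP; split=> -[w x] /=.
  move=> [hN [hU hT]]; split=> //; first split=> //; first split=> //.
    by move=> t; rewrite /= mem_filter => /andP[/negbTE tI /hT]; rewrite /= tI.
  by move=> t; rewrite /= mem_filter => /andP[tI /hT]; rewrite /= tI.
move=> [[hN [hU hT]] hx]; split=> //; split=> // t tS /=.
by case: ifP => tI; [apply: hx|apply: hT]; rewrite /= mem_filter tI.
Qed.

Lemma XI_preimage_tuple_cyl ST BN BU BT : all (fun t : tidx => val t \in I) ST ->
  XI I @^-1` tuple_cyl ST BT = cyl [::] [::] ST BN BU BT.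
Proof.
move=> /allP STI; rewrite /cyl !set_nil !bigcap_set0 !setTI.
by apply/seteqP; split=> w h t tS; have := h t tS; rewrite /= nth_XI ?STI.
Qed.

Lemma set_tau_idem (w : omega R) (x y : seq R) :
  set_tau (set_tau w I x) I y = set_tau w I y.
Proof. by congr Omega; apply/funext => t /=; case: (val t \in I). Qed.

Lemma sec_set_tau (B : set (omega R)) (w : omega R) (x : seq R) :
  sec B I (set_tau w I x) = sec B I w.
Proof. by apply/funext => y; rewrite /sec /= set_tau_idem. Qed.

Lemma XI_set_tau (w : omega R) (x : (size I).-tuple R) :
  uniq I -> all tvalid I -> XI I (set_tau w I x) = x.
Proof.
move=> uI vI; apply: val_inj => /=.
apply: (@eq_from_nth _ 0%R); first by rewrite size_map size_tuple.
move=> i; rewrite size_map => iI.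
have vIi : tvalid (nth (head (0, 0, 0, 0)%N I) I i) by apply/(allP vI)/mem_nth.
rewrite (nth_map (head (0, 0, 0, 0)%N I)) // /tau /set_tau /= val_insubd vIi.
by rewrite mem_nth // index_uniq.
Qed.

Lemma sec_xsection (B : set (Omg R)) (w : Omg R) :
  sec B I w = xsection (resample @^-1` B) w.
Proof. by apply/funext => y; rewrite /xsection /sec /= in_setE. Qed.

Variables (u : nat -> int * int) (F : probability R R) (P : probability (Omg R) R).
Hypothesis P_law : model_law u F P.

Lemma model_law_cyl_split (p : pred tidx) SN SU ST BN BU BT :
  uniq SN -> uniq SU -> uniq ST ->
  (forall k, measurable (BN k)) -> (forall kl, measurable (BU kl)) ->
  (forall t, measurable (BT t)) ->
  P (cyl SN SU ST BN BU BT) =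
  P (cyl SN SU [seq t <- ST | ~~ p t] BN BU BT) *
  P (cyl [::] [::] [seq t <- ST | p t] BN BU BT).
Proof.
move=> uN uU uT mN mU mT.
rewrite /cyl !P_law ?filter_uniq // !big_nil !mul1e -[RHS]muleA; congr (_ * _).
by rewrite !big_filter (bigID p) muleC.
Qed.

Definition resample_law := distribution (P \x distribution P (XI I)) resample.

Lemma resample_law_cyl C : cylinders C -> resample_law C = P C.
Proof.
move=> [SN [SU [ST [BN [BU [BT [uN uU uT [mN mU mT] ->]]]]]]].
have mtuple_cyl : measurable (tuple_cyl [seq t <- ST | val t \in I] BT).
  apply: fin_bigcap_measurable; rewrite ?finite_seq // => t _.
  by rewrite -[X in measurable X]setTI; exact: measurable_fun_nth.
rewrite /resample_law {1}/distribution {1}/pushforward resample_preimage_cyl.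
rewrite /= product_measure1E //; last exact: measurable_cyl.
rewrite (model_law_cyl_split (fun t => val t \in I)) //; congr (_ * _).
by rewrite /= /distribution /pushforward (XI_preimage_tuple_cyl _ BN BU) // filter_all.
Qed.

Lemma resample_invariant A : measurable A ->
  P A = (P \x distribution P (XI I)) (resample @^-1` A).
Proof.
move=> mA; apply: (measure_unique cylinders (fun=> setT) _ _ _ _ P resample_law) => //.
- exact: measurable_Omg_cylinders.
- exact: cylinders_setI.
- by move=> _; exact: cylinders_setT.
- by rewrite bigcup_const.
- by move=> C /resample_law_cyl.
- by move=> _ /=; rewrite (probability_setT P) ltry.
Qed.


Definition positive_sections (B : set (Omg R)) : set (Omg R) :=
  [set w : Omg R | 0 < PI P I (sec B I w)].

Lemma measurable_fun_PI_sec (B : set (Omg R)) : measurable B ->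
  measurable_fun setT (fun w : Omg R => PI P I (sec B I w)).
Proof.
move=> mB; under eq_fun do rewrite sec_xsection.
apply: (measurable_fun_xsection (distribution P (XI I))).
exact: measurable_resample_preimage.
Qed.

Lemma measurable_positive_sections B : measurable B ->
  measurable (positive_sections B).
Proof.
move=> mB; rewrite /positive_sections -[X in measurable X]setTI.
exact: emeasurable_fun_o_infty measurableT (measurable_fun_PI_sec _ mB) 0.
Qed.

Lemma measurable_PhiI RI B : measurable B -> measurable (RI I) ->
  measurable (PhiI P RI I B).
Proof.
move=> mB mRI; apply: measurableI; first exact: measurable_positive_sections.
by rewrite -[X in measurable X]setTI; exact: measurable_XI.
Qed.

Lemma le_measure_positive_sections B : measurable B ->
  P B <= P (positive_sections B).
Proof.
move=> mB; have mresample := measurable_resample_preimage _ mB.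
rewrite resample_invariant //= /product_measure1.
rewrite -[X in _ <= P X]setIT -integral_indic //;
  last exact: measurable_positive_sections.
apply: ge0_le_integral => //.
- exact: measurable_fun_xsection.
- by apply/measurable_EFinP; apply: measurable_indic; exact: measurable_positive_sections.
move=> w _; rewrite indicE /= -sec_xsection.
have [wG|] := boolP (w \in positive_sections B).
  by rewrite probability_le1 // sec_xsection; apply: measurable_xsection.
by rewrite notin_setE /positive_sections /= leNgt => /negP.
Qed.

Lemma resample_preimage_PhiI RI B : uniq I -> all tvalid I ->
  resample @^-1` PhiI P RI I B = positive_sections B `*` RI I.
Proof.
move=> uI vI; apply/funext => -[w x]; apply/propext.
by rewrite /PhiI /positive_sections /resample /= sec_set_tau XI_set_tau.
Qed.

Lemma PhiI_gt0 RI B : uniq I -> all tvalid I ->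
  measurable B -> measurable (RI I) -> 0 < PI P I (RI I) ->
  0 < P B -> 0 < P (PhiI P RI I B).
Proof.
move=> uI vI mB mRI RI_gt0 B_gt0.
rewrite resample_invariant; last exact: measurable_PhiI.
rewrite resample_preimage_PhiI // product_measure1E //;
  last exact: measurable_positive_sections.
by rewrite mule_gt0 // (lt_le_trans B_gt0) // le_measure_positive_sections.
Qed.

End resampling.
Arguments PhiI_gt0 {R I u F P} P_law {RI B}.

Lemma measure_fiber_gt0 d (T : measurableType d) (R : realType)
    (mu : measure T R) (K : countType) (f : T -> K) (A : set T) :
  (forall k, measurable (f @^-1` [set k])) -> measurable A -> 0 < mu A ->
  exists k, 0 < mu (A `&` f @^-1` [set k]).
Proof.
move=> mf mA A_gt0; apply: contrapT => /forallNP fiber_null.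
pose fiber n := if unpickle n is Some k then A `&` f @^-1` [set k] else set0.
have [N [mN N0 fiberN]] : mu.-negligible (\bigcup_n fiber n).
  apply: negligible_bigcup => n; rewrite /fiber; case: unpickle => [k|].
    exists (A `&` f @^-1` [set k]); split=> //; first exact: measurableI.
    by apply/eqP; rewrite eq_le measure_ge0 andbT leNgt; apply/negP/fiber_null.
  exact: negligible_set0.
have : mu A <= mu N.
  apply: le_measure; rewrite ?inE // => x Ax.
  by apply: fiberN; exists (pickle (f x)) => //; rewrite /fiber pickleK.
by rewrite N0 leNgt A_gt0.
Qed.
Arguments measure_fiber_gt0 {d T R mu K f A}.

Section Phi.
Variables (R : realType) (P : probability (Omg R) R).
Variables (RI : forall I : seq quad, set ((size I).-tuple R)) (W : Omg R -> seq quad).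
Hypothesis mW : forall I, measurable (evW W I).

Lemma measurable_Phi A : (forall I, Kset I -> measurable (RI I)) ->
  measurable A -> measurable (Phi P RI W A).
Proof.
move=> mRI mA; rewrite /Phi bigcup_mkcond.
apply: countable_bigcupT_measurable => [|I]; first exact: countableP.
case: ifPn => [/set_mem KI|_]; last exact: measurable0.
by apply: measurable_PhiI; [exact: measurableI|exact: mRI].
Qed.

Lemma Phi_sub_PhiT A : Phi P RI W A `<=` PhiT RI W A.
Proof.
move=> w [I KI [sec_gt0 RIw]]; exists I => //; split=> //.
apply/set0P; apply: contraTneq sec_gt0 => ->.
by rewrite /PI preimage_set0 measure0 ltxx.
Qed.

Lemma Phi_gt0 u F A : model_law u F P ->
  (forall I, Kset I -> measurable (RI I) /\ 0 < PI P I (RI I)) ->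
  (forall w, Kset (W w)) ->
  measurable A -> 0 < P A -> 0 < P (Phi P RI W A).
Proof.
move=> P_law RI_pos W_K mA A_gt0.
have [I AI_gt0] := measure_fiber_gt0 mW mA A_gt0.
have /set0P[w [_ Ww]] : A `&` evW W I != set0.
  by apply: contraTneq AI_gt0 => ->; rewrite measure0 ltxx.
have KI : Kset I by rewrite -Ww.
have [[_ [uI [_ vI]]] [mRI RI_gt0]] := (KI, RI_pos I KI).
have mAI : measurable (A `&` evW W I) by exact: measurableI.
apply: (lt_le_trans (PhiI_gt0 P_law uI vI mAI mRI RI_gt0 AI_gt0)).
apply: le_measure; rewrite ?inE.
- exact: measurable_PhiI.
- by apply: measurable_Phi => // J /RI_pos[].
- by move=> v PhiIv; exists I.
Qed.

End Phi.

Theorem lemma1 (R : realType) (u : nat -> (int * int)%type) (F : probability R R)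
  (P : probability (Omg R) R) (RI : forall I : seq quad, set ((size I).-tuple R))
  (W : Omg R -> seq quad) :
  bijective u ->
  F `]-oo, 0%R[%classic = 0 ->
  model_law u F P ->
  (forall I, Kset I -> measurable (RI I) /\ 0 < PI P I (RI I)) ->
  (forall w, Kset (W w)) ->
  (forall I, measurable (evW W I)) ->
  forall A : set (Omg R), measurable A ->
    measurable (Phi P RI W A) /\ Phi P RI W A `<=` PhiT RI W A /\
    (0 < P A -> 0 < P (Phi P RI W A)).
Proof.
move=> _ _ P_law RI_pos W_K mW A mA; split; [|split].
- by apply: measurable_Phi => // I /RI_pos[].
- exact: Phi_sub_PhiT.
- exact: Phi_gt0 P_law RI_pos W_K mA.
Qed.
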